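(* Let $O = \{1,2,3,4\}^N$ be the set of ontic states of a system of $N$ elementary subsystems, and let $\mathcal{Q} = \{Q_1,\dots,Q_{2N}\}$ be a canonical set of $2N$ binary questions, with $Q_i$ identified with the partition $(M_{i,0}, M_{i,1})$ of $O$. Let $E \subseteq O$ be the ontic basis of a valid epistemic state which consists of known answers $a_i \in \{0,1\}$ to a subset $\mathcal{E} \subseteq \{1,\dots,2N\}$ of $k = |\mathcal{E}|$ of these questions, so that $E = \bigcap_{i \in \mathcal{E}} M_{i,a_i}$ is the set of ontic states compatible with these answers. Then $|E| = 2^{2N-k}$.
   Context: In Spekkens' toy theory, a system of $N$ elementary subsystems has ontic states $O=\{1,2,3,4\}^N$. A binary question ''is the ontic state in $M_{0}$?'' is identified with the partition $(M_0, O\setminus M_0)$ of $O$. A canonical set of questions is a set of binary questions such that every ontic state is uniquely specified by its answers; for $N$ elementary systems it consists of $2N$ questions. An epistemic state is specified by the answers to some of the questions of a canonical set, and its ontic basis is the set of ontic states compatible with these answers. An epistemic state is valid if it obeys the knowledge balance principle (at most half of the questions of a canonical set are answered), both globally and for the marginal on every subset of subsystems. *)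

From mathcomp Require Import all_boot.
Set Implicit Arguments. Unset Strict Implicit. Unset Printing Implicit Defensive.

Definition ontic (N : nat) := {ffun 'I_N -> 'I_4}.

(* A binary question is the partition (M0, O \ M0); we store M0.
   The answer to question M0 in ontic state x is 0 (false) iff x \in M0, 1 (true) otherwise. *)
Definition answer (N : nat) (M0 : {set ontic N}) (x : ontic N) : bool := x \notin M0.

Definition canonical (N : nat) (Q : 'I_(2 * N) -> {set ontic N}) : Prop :=
  forall x y : ontic N, (forall i, answer (Q i) x = answer (Q i) y) -> x = y.

Definition ontic_basis (N : nat) (Q : 'I_(2 * N) -> {set ontic N})
  (Eq : {set 'I_(2 * N)}) (a : 'I_(2 * N) -> bool) : {set ontic N} :=
  [set x | [forall i in Eq, answer (Q i) x == a i]].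

Definition marginal (N : nat) (S : {set 'I_N}) (E : {set ontic N}) : {set ontic N} :=
  [set [ffun j => if j \in S then (x : ontic N) j else (ord0 : 'I_4)] | x in E].

(* Validity (knowledge balance principle): globally at most half of the 2N questions
   are answered, and for every subset S of subsystems the marginal keeps at least
   half of the ontic uncertainty, i.e. at most |S| of the 2|S| canonical questions
   for S are determined (marginal ontic basis of size >= 2^|S|). *)
Definition valid (N : nat) (Q : 'I_(2 * N) -> {set ontic N})
  (Eq : {set 'I_(2 * N)}) (a : 'I_(2 * N) -> bool) : Prop :=
  #|Eq| <= N /\
  forall S : {set 'I_N}, 2 ^ #|S| <= #|marginal S (ontic_basis Q Eq a)|.

From mathcomp Require Import all_boot.

(* The answers to a canonical set of 2N questions identify O = {1,2,3,4}^N,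
   of size 4^N = 2^(2N), with the 2^(2N) answer vectors, so the states
   compatible with k prescribed answers correspond to the answer vectors
   free in the remaining 2N - k coordinates. *)

Lemma card_ffun_agree_on (I T : finType) (E : {set I}) (a : I -> T) :
  #|[set g : {ffun I -> T} | [forall i in E, g i == a i]]| =
  #|T| ^ (#|I| - #|E|).
Proof.
pose F i : pred T := if i \in E then pred1 (a i) else predT.
have -> : [set g : {ffun I -> T} | [forall i in E, g i == a i]] =
          [set g | g \in family F].
  apply/setP => g; rewrite !inE; apply/forallP/familyP => agree i.
    by rewrite /F; case: ifP => iE //=; have := agree i; rewrite iE.
  by apply/implyP => iE; have := agree i; rewrite /F iE.
rewrite cardsE card_family foldrE big_map big_enum /= (bigID (mem E)) /=.
rewrite big1 => [|i iE]; last by rewrite /F iE card1.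
rewrite mul1n (eq_bigr (fun=> #|T|)) => [|i iNE]; last first.
  by rewrite /F (negbTE iNE); apply: eq_card.
rewrite prod_nat_const -(cardsC E) addKn.
by congr (_ ^ _); apply: eq_card => i; rewrite inE.
Qed.

Section CanonicalQuestions.

Variables (N : nat) (Q : 'I_(2 * N) -> {set ontic N}).
Hypothesis Qcanonical : canonical Q.

Definition answers (x : ontic N) : {ffun 'I_(2 * N) -> bool} :=
  [ffun i => answer (Q i) x].

Lemma answers_inj : injective answers.
Proof.
by move=> x y /ffunP eq_xy; apply: Qcanonical => i; have := eq_xy i; rewrite !ffunE.
Qed.

Lemma answers_bij : bijective answers.
Proof.
apply: inj_card_bij answers_inj _.
by rewrite !card_ffun !card_ord card_bool expnM.
Qed.

Lemma ontic_basisE (Eq : {set 'I_(2 * N)}) (a : 'I_(2 * N) -> bool) :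
  ontic_basis Q Eq a =
  answers @^-1: [set g : {ffun _ -> bool} | [forall i in Eq, g i == a i]].
Proof. by apply/setP => x; rewrite !inE; apply: eq_forallb => i; rewrite ffunE. Qed.

End CanonicalQuestions.

Theorem mainTheorem2 (N : nat) (Q : 'I_(2 * N) -> {set ontic N})
  (Eq : {set 'I_(2 * N)}) (a : 'I_(2 * N) -> bool) :
  canonical Q -> valid Q Eq a ->
  #|ontic_basis Q Eq a| = 2 ^ (2 * N - #|Eq|).
Proof.
move=> Qcanonical _.
rewrite ontic_basisE on_card_preimset; last exact/onW_bij/answers_bij.
by rewrite card_ffun_agree_on card_bool card_ord.
Qed.
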